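(* Let $p\ge2$ be an integer and let $f\in\mathcal{R}$ satisfy $U_pf=\lambda f$ for some $\lambda\neq0$. If $f(x)=x^m\tilde f(x)$ for some positive integer $m$ and some rational function $\tilde f$ regular at $0$ with $\tilde f(0)\neq0$, then $p\nmid m$.
   Context: $\mathcal{R}$ denotes the real vector space of rational functions $f(x)=A(x)/B(x)$ with $A,B\in\mathbb{R}[x]$, $B(0)\neq 0$ and $\deg A<\deg B$. For $f$ with Taylor expansion $f(x)=\sum_{n\ge0}a_nx^n$ at $0$ and a positive integer $p$, $U_pf(x)=\sum_{n\ge 0}a_{pn}x^n$. *)

From HB Require Import structures.
From mathcomp Require Import all_boot all_order all_algebra.
From mathcomp Require Export reals.
Set Implicit Arguments. Unset Strict Implicit. Unset Printing Implicit Defensive.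
Import Order.TTheory GRing.Theory Num.Theory.
Local Open Scope ring_scope.

(* f = A/B belongs to the space \mathcal{R}: B(0) <> 0 and deg A < deg B
   (size = deg + 1, size 0 = 0, so deg A < deg B <-> size A < size B). *)
Definition inRcal (R : realType) (A B : {poly R}) : Prop :=
  B.[0] != 0 /\ (size A < size B)%N.

(* a is the Taylor coefficient sequence at 0 of A/B (with B(0) <> 0):
   B(x) * sum_n a_n x^n = A(x) as formal power series. *)
Definition taylor_coefs (R : realType) (A B : {poly R}) (a : nat -> R) : Prop :=
  forall n : nat, \sum_(k < n.+1) B`_k * a (n - k)%N = A`_n.

(* Coefficient sequence of U_p f, where a is the coefficient sequence of f. *)
Definition Up (R : realType) (p : nat) (a : nat -> R) : nat -> R :=
  fun n => a (p * n)%N.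

(* Since B(0) and D(0) are nonzero, B and D are coprime to every power of x, so
   A D = x^m C B can be read modulo x^(m+1) on the truncated Taylor series of A/B:
   the coefficients a_n vanish for n < m and D(0) a_m = C(0) is nonzero.  If
   m = p k, then k < m and a_m = (U_p a)_k = lam a_k = 0. *)
From HB Require Import structures.
From mathcomp Require Import all_boot all_order all_algebra reals.
From mathcomp Require Import ring.
Import Order.TTheory GRing.Theory Num.Theory.
Local Open Scope ring_scope.

Section DivisibilityByXn.

Context {R : idomainType}.
Implicit Types (C D P Q : {poly R}) (N : nat).

Lemma dvdXnP N Q : reflect (forall n, (n < N)%N -> Q`_n = 0) ('X^N %| Q).
Proof.
rewrite /dvdp -Pdiv.IdomainMonic.take_poly_modp; apply: (iffP eqP).
  by move=> QN0 n ltnN; have := coef_take_poly N Q n; rewrite QN0 coef0 ltnN.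
by move=> Q0; apply/polyP => n; rewrite coef_take_poly coef0; case: ifP => // /Q0.
Qed.

Lemma coprimep_Xn N D : D.[0] != 0 -> coprimep 'X^N D.
Proof. by move=> D0; apply/coprimep_expl; rewrite coprimep_sym coprimepX rootE. Qed.

Lemma Gauss_dvdXnr {D} N Q : D.[0] != 0 -> ('X^N %| D * Q) = ('X^N %| Q).
Proof. by move=> D0; rewrite Gauss_dvdpr ?coprimep_Xn. Qed.

Lemma dvdXnS_mulBXn {m D P C} : D.[0] != 0 -> 'X^(m.+1) %| D * P - 'X^m * C ->
  exists2 Q, P = Q * 'X^m & D.[0] * Q.[0] = C.[0].
Proof.
move=> D0 dvdXm1.
have /(Pdiv.IdomainMonic.dvdpP (monicXn R m))[Q defP] : 'X^m %| P.
  rewrite -(Gauss_dvdXnr _ _ D0) -(dvdp_subl (D * P) (dvdp_mulIl 'X^m C)).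
  by apply: dvdp_trans dvdXm1; rewrite dvdp_exp2l.
exists Q => //; suff : root (D * Q - C) 0 by rewrite rootE !hornerE subr_eq0 => /eqP.
rewrite -dvdp_XsubCl subr0 -(dvdp_mul2l _ _ (monic_neq0 (monicXn R m))).
by rewrite -exprSr mulrBr mulrCA (mulrC 'X^m Q) -defP.
Qed.

End DivisibilityByXn.

Lemma taylor_coefs_dvdXn (R : realType) (A B : {poly R}) a N :
  taylor_coefs A B a -> 'X^N %| B * \poly_(i < N) a i - A.
Proof.
move=> taylorAB; apply/dvdXnP => n ltnN.
rewrite coefB coefM -taylorAB; apply/eqP; rewrite subr_eq0; apply/eqP/eq_bigr => i _.
by rewrite coef_poly (leq_ltn_trans (leq_subr _ _) ltnN).
Qed.

Lemma decimation_eigen_ndvd_order {R : pzSemiRingType} {p} {a : nat -> R} {lam m} :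
  (1 < p)%N -> (forall n, a (p * n)%N = lam * a n) -> (0 < m)%N ->
  (forall n, (n < m)%N -> a n = 0) -> a m != 0 -> ~~ (p %| m)%N.
Proof.
move=> p_gt1 a_eigen m_gt0 a_lt_m am_neq0; apply/negP => /dvdnP[k def_m].
have k_gt0 : (0 < k)%N by move: m_gt0; rewrite def_m muln_gt0 => /andP[].
have lt_k_m : (k < m)%N by rewrite def_m ltn_Pmulr.
by move: am_neq0; rewrite def_m mulnC a_eigen a_lt_m // mulr0 eqxx.
Qed.

Theorem mainTheorem13 (R : realType) (p : nat) (A B : {poly R}) (a : nat -> R)
    (lam : R) (m : nat) (C D : {poly R}) :
  (2 <= p)%N ->
  inRcal A B ->
  taylor_coefs A B a ->
  lam != 0 ->
  (forall n : nat, Up p a n = lam * a n) ->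
  (0 < m)%N ->
  D.[0] != 0 ->
  C.[0] / D.[0] != 0 ->
  A * D = 'X^m * C * B ->
  ~~ (p %| m)%N.
Proof.
move=> p_gt1 [B0 _] taylorAB _ Up_eigen m_gt0 D0 CD0 AD.
pose P := \poly_(i < m.+1) a i.
have dvdDP : 'X^(m.+1) %| D * P - 'X^m * C.
  rewrite -(Gauss_dvdXnr _ _ B0).
  have -> : B * (D * P - 'X^m * C) = (B * P - A) * D by rewrite mulrBl AD; ring.
  exact/dvdp_mulr/taylor_coefs_dvdXn.
have [Q defP DQC] := dvdXnS_mulBXn D0 dvdDP.
have coefP n : (n <= m)%N -> a n = (Q * 'X^m)`_n by rewrite -defP coef_poly ltnS => ->.
have a_eigen n : a (p * n)%N = lam * a n := Up_eigen n.
apply: (decimation_eigen_ndvd_order p_gt1 a_eigen m_gt0).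
  by move=> n lt_n_m; rewrite (coefP n (ltnW lt_n_m)) coefMXn lt_n_m.
rewrite coefP // coefMXn ltnn subnn -horner_coef0.
by apply: contraNneq CD0 => Q0; rewrite -DQC Q0 mulr0 mul0r.
Qed.
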